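(* Let $\Sigma(B)\subset\Sigma(C)\subset(\mathbb{N}^* )^{\mathbb{Z}}$ be two transitive and symmetric subshifts of finite type. Let $x\in\mathbb{R}$ be such that $m(\beta)\le x$ for all $\beta\in\Sigma(B)$. Suppose that $\gamma\in\Sigma(C)$ satisfies $m(\gamma)=\lambda_0(\gamma)=m>x$ and that $\gamma$ connects both positively and negatively to $B$. Then $m\in L$.
   Context: $\mathbb{N}^*$ denotes the positive integers. For $\underline a=(a_n)_{n\in\mathbb{Z}}\in(\mathbb{N}^* )^{\mathbb{Z}}$: $\lambda_0(\underline a)=[a_0;a_1,a_2,\dots]+[0;a_{-1},a_{-2},\dots]$; $\sigma$ is the left shift; $m(\underline a)=\sup_{n\in\mathbb{Z}}\lambda_0(\sigma^n\underline a)$ (Markov value), $\ell(\underline a)=\limsup_{n\to\infty}\lambda_0(\sigma^n\underline a)$ (Lagrange value); $L=\{\ell(\underline a):\underline a\in(\mathbb{N}^* )^{\mathbb{Z}}\}$ is the Lagrange spectrum. For a subshift $\Sigma(A)\subset(\mathbb{N}^* )^{\mathbb{Z}}$, let $\Sigma^+(A)$ be the set of one-sided sequences $(\theta_1,\theta_2,\dots)$ with $(\theta_n)_{n\in\mathbb{Z}}\in\Sigma(A)$, $K(A)=\{[0;\theta_1,\theta_2,\dots]:(\theta_n)\in\Sigma(A)\}$ and $K^-(A)=\{[0;\theta_{-1},\theta_{-2},\dots]:(\theta_n)\in\Sigma(A)\}$; the subshift is called symmetric if $K(A)=K^-(A)$. A sequence $\alpha\in\Sigma(C)$ with $m(\alpha)=\lambda_0(\alpha)$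 connects positively to $B$ if for every $k\in\mathbb{N}$ there exist a finite word $\tau$ and $\upsilon\in\Sigma^+(B)$ such that the bi-infinite sequence $\tilde\alpha:=\dots\alpha_{-2}\alpha_{-1}\alpha_0\dots\alpha_k\tau\upsilon$ (which agrees with $\alpha$ at indices $\le k$ and is followed by $\tau$ and then $\upsilon$) satisfies $m(\tilde\alpha)<m(\alpha)+2^{-k}$. It connects negatively to $B$ if the reversed sequence $\alpha^t=(\alpha_{-n})_{n\in\mathbb{Z}}$ connects positively to $B$. *)

From Stdlib Require Import Reals ZArith List Lia.
From Coquelicot Require Import Coquelicot.
Open Scope R_scope.

(** Bi-infinite sequences of naturals (indexed by Z); membership in
    (N^* )^Z is the predicate [pos_seq]. *)
Definition bseq := Z -> nat.
Definition pos_seq (a : bseq) : Prop := forall n, (1 <= a n)%nat.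

Fixpoint cf_fin (n : nat) (f : nat -> nat) : R :=
  match n with
  | O => INR (f O)
  | S n' => INR (f O) + / cf_fin n' (fun k => f (S k))
  end.

Definition cf (f : nat -> nat) : R := real (Lim_seq (fun n => cf_fin n f)).

Definition cf0 (g : nat -> nat) : R :=
  cf (fun k => match k with O => O | S k' => g k' end).

Definition lambda0 (a : bseq) : R :=
  cf (fun k => a (Z.of_nat k)) + cf0 (fun k => a (- Z.of_nat (S k))%Z).

Definition shiftn (n : Z) (a : bseq) : bseq := fun k => a (k + n)%Z.

Definition markov (a : bseq) : Rbar :=
  Lub_Rbar (fun r => exists n : Z, r = lambda0 (shiftn n a)).

Definition lagrange (a : bseq) : Rbar :=
  LimSup_seq (fun n : nat => lambda0 (shiftn (Z.of_nat n) a)).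

Definition Lspec (r : R) : Prop := exists a : bseq, pos_seq a /\ lagrange a = Finite r.

(** Subshift of finite type Sigma(A): a finite alphabet of positive integers
    and a 0/1 transition matrix on it. *)
Record SFT := { sft_alph : list nat; sft_trans : nat -> nat -> bool }.

Definition Sigma (A : SFT) (t : bseq) : Prop :=
  forall n : Z, (1 <= t n)%nat /\ In (t n) (sft_alph A) /\
                sft_trans A (t n) (t (n + 1)%Z) = true.

(** Topological transitivity: any two allowed central blocks can be joined
    inside Sigma(A) (the second block appearing after the first). *)
Definition transitive (A : SFT) : Prop :=
  forall t1 t2 : bseq, Sigma A t1 -> Sigma A t2 -> forall k : nat,
    exists t : bseq, exists p : Z,
      Sigma A t /\ (2 * Z.of_nat k < p)%Z /\
      (forall i : Z, (- Z.of_nat k <= i <= Z.of_nat k)%Z -> t i = t1 i) /\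
      (forall i : Z, (- Z.of_nat k <= i <= Z.of_nat k)%Z -> t (i + p)%Z = t2 i).

Definition Kplus (A : SFT) (r : R) : Prop :=
  exists t, Sigma A t /\ r = cf0 (fun k => t (Z.of_nat (S k))).
Definition Kminus (A : SFT) (r : R) : Prop :=
  exists t, Sigma A t /\ r = cf0 (fun k => t (- Z.of_nat (S k))%Z).

Definition symmetric (A : SFT) : Prop := forall r, Kplus A r <-> Kminus A r.

(** Sigma^+(A): one-sided sequences (theta_1, theta_2, ...) (indexed from 0
    here: u j = theta_{j+1}). *)
Definition SigmaPlus (A : SFT) (u : nat -> nat) : Prop :=
  exists t, Sigma A t /\ forall j : nat, u j = t (Z.of_nat (S j)).

(** The sequence ... a_{k-1} a_k tau upsilon. *)
Definition glue (a : bseq) (k : Z) (tau : list nat) (u : nat -> nat) : bseq :=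
  fun n =>
    if (n <=? k)%Z then a n
    else if (n - k <=? Z.of_nat (length tau))%Z
         then nth (Z.to_nat (n - k - 1)) tau O
         else u (Z.to_nat (n - k - 1 - Z.of_nat (length tau))).

(** Positive connection to B (the standing requirement m(a) = lambda0(a)
    of the paper's definition is stated separately in the theorem). *)
Definition connects_pos (a : bseq) (B : SFT) : Prop :=
  forall k : nat, exists (tau : list nat) (u : nat -> nat),
    List.Forall (fun c => (1 <= c)%nat) tau /\ SigmaPlus B u /\
    Rbar_lt (markov (glue a (Z.of_nat k) tau u))
            (Rbar_plus (markov a) (Finite (/ 2 ^ k))).

Definition transpose (a : bseq) : bseq := fun n => a (- n)%Z.

Definition connects_neg (a : bseq) (B : SFT) : Prop :=
  connects_pos (transpose a) B.

(* For every k, the positive connection of gamma to B yields a sequence P_k that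
   coincides with gamma up to index k, continues into a sequence of Sigma(B), and
   has Markov value below m + 2^-k; the negative connection yields the mirror image
   N_k, whose left tail can be read inside Sigma(B) because B is symmetric and a
   continued fraction determines its digits.  Transitivity of B bridges the tail of
   P_k to the head of N_(k+1) by a sequence of Sigma(B), of Markov value <= x < m.
   Concatenating N_0 P_0 bridge N_1 P_1 bridge ... gives a sequence alpha in which
   the central blocks of gamma of every radius reappear, so l(alpha) >= m, while far
   out every window of alpha of radius k is copied from a piece of Markov value at
   most m + 2^-k.  As windows of radius w determine lambda_0 up to 16 * 2^-w,
   l(alpha) = m. *)

From Stdlib Require Import Reals ZArith List Lia Lra Psatz.
From Stdlib Require Import FunctionalExtensionality IndefiniteDescription.
From Coquelicot Require Import Coquelicot.
Open Scope R_scope.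

(** * Continued fractions and lambda_0 *)

Definition cf_digits (f : nat -> nat) : Prop := forall i, (1 <= i)%nat -> (1 <= f i)%nat.
Definition pos_nat (f : nat -> nat) : Prop := forall i, (1 <= f i)%nat.

Lemma INR_ge_1 n : (1 <= n)%nat -> 1 <= INR n.
Proof. intros H; apply (le_INR 1) in H; simpl in H; lra. Qed.

Lemma cf_digits_tail f : cf_digits f -> pos_nat (fun k => f (S k)).
Proof. intros H i; apply H; lia. Qed.

Lemma pos_nat_cf_digits f : pos_nat f -> cf_digits f.
Proof. intros H i _; apply H. Qed.

Lemma inv_le_1 a : 1 <= a -> 0 < / a <= 1.
Proof.
  intros Ha; split; [apply Rinv_0_lt_compat; lra|].
  rewrite <- Rinv_1; apply Rinv_le_contravar; lra.
Qed.

Lemma cf_fin_bounds : forall n f, cf_digits f -> INR (f O) <= cf_fin n f <= INR (f O) + 1.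
Proof.
  induction n as [|n IH]; intros f Hf; simpl; [lra|].
  pose proof (IH _ (pos_nat_cf_digits _ (cf_digits_tail _ Hf))) as Hn; simpl in Hn.
  pose proof (INR_ge_1 _ (Hf 1%nat ltac:(lia))).
  pose proof (inv_le_1 (cf_fin n (fun k => f (S k))) ltac:(lra)).
  lra.
Qed.

Lemma cf_fin_ge_1 n f : pos_nat f -> 1 <= cf_fin n f.
Proof.
  intros Hf; pose proof (cf_fin_bounds n f (pos_nat_cf_digits _ Hf)).
  pose proof (INR_ge_1 _ (Hf O)); lra.
Qed.

Lemma inv_lipschitz a b : 1 <= a -> 1 <= b -> Rabs (/ a - / b) <= Rabs (a - b).
Proof.
  intros Ha Hb. replace (/ a - / b) with ((b - a) * / (a * b)) by (field; lra).
  rewrite Rabs_mult, Rabs_minus_sym, (Rabs_pos_eq (/ _)).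
  2:{ apply Rlt_le, Rinv_0_lt_compat; nra. }
  pose proof (inv_le_1 (a * b) ltac:(nra)). pose proof (Rabs_pos (a - b)). nra.
Qed.

(* Two steps of the continued fraction map contract by a factor 4:
   [x |-> / (p + / x)] has derivative [1 / (p x + 1)^2 <= 1/4] on [x >= 1]. *)
Lemma cf_fin_two_steps_contract n n' f : cf_digits f ->
  Rabs (cf_fin (S (S n)) f - cf_fin (S (S n')) f)
  <= / 4 * Rabs (cf_fin n (fun k => f (S (S k))) - cf_fin n' (fun k => f (S (S k)))).
Proof.
  intros Hf.
  assert (Hg : pos_nat (fun k => f (S (S k)))) by (intro i; apply Hf; lia).
  set (g := fun k => f (S (S k))) in *.
  change (cf_fin (S (S n)) f) with (INR (f O) + / (INR (f 1%nat) + / cf_fin n g)).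
  change (cf_fin (S (S n')) f) with (INR (f O) + / (INR (f 1%nat) + / cf_fin n' g)).
  pose proof (cf_fin_ge_1 n _ Hg) as HX; pose proof (cf_fin_ge_1 n' _ Hg) as HY.
  pose proof (INR_ge_1 _ (Hf 1%nat ltac:(lia))) as Hp.
  set (X := cf_fin n _) in *; set (Y := cf_fin n' _) in *; set (p := INR (f 1%nat)) in *.
  assert (2 <= p * X + 1) by nra. assert (2 <= p * Y + 1) by nra.
  replace (INR (f O) + / (p + / X) - (INR (f O) + / (p + / Y)))
    with ((X - Y) * / ((p * X + 1) * (p * Y + 1))).
  2:{ field. repeat split; try nra. }
  rewrite Rabs_mult, (Rabs_pos_eq (/ _)).
  2:{ apply Rlt_le, Rinv_0_lt_compat; nra. }
  assert (/ ((p * X + 1) * (p * Y + 1)) <= / 4) by (apply Rinv_le_contravar; nra).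
  pose proof (Rabs_pos (X - Y)). nra.
Qed.

Lemma cf_fin_cauchy : forall n n' f, cf_digits f -> (n <= n')%nat ->
  Rabs (cf_fin n f - cf_fin n' f) <= 2 * (/ 2) ^ n.
Proof.
  assert (Hunit : forall n n' f, cf_digits f -> Rabs (cf_fin n f - cf_fin n' f) <= 1).
  { intros n n' f Hf. pose proof (cf_fin_bounds n f Hf); pose proof (cf_fin_bounds n' f Hf).
    apply Rabs_le; lra. }
  intro n; induction n as [n IH] using lt_wf_ind; intros n' f Hf Hn.
  destruct n as [|[|n]].
  - specialize (Hunit O n' f Hf); simpl pow; lra.
  - specialize (Hunit 1%nat n' f Hf); simpl pow; lra.
  - destruct n' as [|[|n']]; try lia.
    eapply Rle_trans; [apply cf_fin_two_steps_contract, Hf|].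
    assert (Hg : cf_digits (fun k => f (S (S k)))) by (intros i _; apply Hf; lia).
    pose proof (IH n ltac:(lia) n' _ Hg ltac:(lia)). simpl pow in *. lra.
Qed.

Lemma half_pow_pos n : 0 < (/ 2) ^ n.
Proof. apply pow_lt; lra. Qed.

Lemma half_pow_le n n' : (n <= n')%nat -> (/ 2) ^ n' <= (/ 2) ^ n.
Proof. induction 1 as [|n' _ IH]; [lra|]. simpl. pose proof (half_pow_pos n'). lra. Qed.

Lemma half_pow_lt_eventually y : 0 < y -> exists N, forall n, (N <= n)%nat -> (/ 2) ^ n < y.
Proof.
  intros Hy. destruct (pow_lt_1_zero (/ 2) ltac:(rewrite Rabs_pos_eq; lra) y Hy) as [N HN].
  exists N; intros n Hn. specialize (HN n Hn). rewrite Rabs_pos_eq in HN; auto.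
  apply pow_le; lra.
Qed.

Lemma eq_0_of_half_pow_bound z C : (forall n, Rabs z <= C * (/ 2) ^ n) -> z = 0.
Proof.
  intros H. destruct (Req_dec z 0) as [|Hz]; auto. exfalso.
  apply Rabs_pos_lt in Hz.
  assert (HC : 0 < C) by (specialize (H O); simpl in H; lra).
  destruct (half_pow_lt_eventually (Rabs z / C)) as [N HN]; [apply Rdiv_lt_0_compat; lra|].
  specialize (HN N (le_n _)). specialize (H N).
  apply Rmult_lt_compat_l with (r := C) in HN; auto. field_simplify in HN; lra.
Qed.

Lemma lim_seq_bounds u (l : R) a b N : is_lim_seq u l ->
  (forall n, (N <= n)%nat -> a <= u n <= b) -> a <= l <= b.
Proof.
  intros Hl Hb. split.
  - apply (is_lim_seq_le_loc (fun _ => a) u a l);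
      [exists N; apply Hb|apply is_lim_seq_const|exact Hl].
  - apply (is_lim_seq_le_loc u (fun _ => b) l b);
      [exists N; apply Hb|exact Hl|apply is_lim_seq_const].
Qed.

Lemma cf_fin_cvg f : cf_digits f -> is_lim_seq (fun n => cf_fin n f) (cf f).
Proof.
  intros Hf.
  assert (Hex : ex_finite_lim_seq (fun n => cf_fin n f)).
  { apply ex_lim_seq_cauchy_corr. intros [eps Heps].
    destruct (half_pow_lt_eventually (eps / 2)) as [N HN]; [simpl; lra|].
    exists N. intros n n' Hn Hn'. simpl.
    destruct (le_ge_dec n n') as [Hle|Hge].
    - pose proof (cf_fin_cauchy n n' f Hf Hle). specialize (HN n Hn). lra.
    - pose proof (cf_fin_cauchy n' n f Hf Hge). specialize (HN n' Hn').
      rewrite Rabs_minus_sym. lra. }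
  destruct Hex as [l Hl]. unfold cf. rewrite (is_lim_seq_unique _ _ Hl). exact Hl.
Qed.

Lemma cf_fin_approx f n : cf_digits f -> Rabs (cf f - cf_fin n f) <= 2 * (/ 2) ^ n.
Proof.
  intros Hf. apply Rabs_le.
  enough (cf_fin n f - 2 * (/ 2) ^ n <= cf f <= cf_fin n f + 2 * (/ 2) ^ n) by lra.
  apply (lim_seq_bounds _ _ _ _ n (cf_fin_cvg f Hf)). intros k Hk.
  pose proof (cf_fin_cauchy n k f Hf Hk) as H. apply Rabs_le_between in H. lra.
Qed.

Lemma cf_bounds f : cf_digits f -> INR (f O) <= cf f <= INR (f O) + 1.
Proof.
  intros Hf. apply (lim_seq_bounds _ _ _ _ O (cf_fin_cvg f Hf)). intros; apply cf_fin_bounds; auto.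
Qed.

Lemma cf_ge_1 f : pos_nat f -> 1 <= cf f.
Proof.
  intros Hf; pose proof (cf_bounds f (pos_nat_cf_digits _ Hf)).
  pose proof (INR_ge_1 _ (Hf O)); lra.
Qed.

Lemma cf_unfold f : cf_digits f -> cf f = INR (f O) + / cf (fun k => f (S k)).
Proof.
  intros Hf. apply Rminus_diag_uniq, (eq_0_of_half_pow_bound _ 3). intros n.
  pose proof (cf_fin_approx f (S n) Hf) as H1.
  pose proof (cf_digits_tail f Hf) as Ht.
  pose proof (cf_fin_approx _ n (pos_nat_cf_digits _ Ht)) as H2.
  pose proof (inv_lipschitz _ _ (cf_fin_ge_1 n _ Ht) (cf_ge_1 _ Ht)) as H3.
  change (cf_fin (S n) f) with (INR (f O) + / cf_fin n (fun k => f (S k))) in H1.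
  rewrite Rabs_minus_sym in H2. simpl pow in H1.
  set (a := cf f) in *; set (b := cf (fun k => f (S k))) in *.
  set (c := cf_fin n (fun k => f (S k))) in *.
  replace (a - (INR (f O) + / b)) with ((a - (INR (f O) + / c)) + (/ c - / b)) by ring.
  eapply Rle_trans; [apply Rabs_triang|]. lra.
Qed.

Lemma cf_ext f g : (forall k, f k = g k) -> cf f = cf g.
Proof. intros H; f_equal; apply functional_extensionality; auto. Qed.

Lemma cf0_inv g : pos_nat g -> cf0 g = / cf g.
Proof.
  intros Hg. unfold cf0. rewrite cf_unfold; [simpl; apply Rplus_0_l|].
  intros [|i] Hi; [lia|apply Hg].
Qed.

Lemma cf_fin_ext : forall n f g, (forall i, (i <= n)%nat -> f i = g i) -> cf_fin n f = cf_fin n g.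
Proof.
  induction n as [|n IH]; intros f g H; simpl; rewrite H by lia; [reflexivity|].
  do 2 f_equal. apply IH. intros; apply H; lia.
Qed.

Lemma inv_cf_close f g n : pos_nat f -> pos_nat g -> (forall i, (i < n)%nat -> f i = g i) ->
  Rabs (/ cf f - / cf g) <= 8 * (/ 2) ^ n.
Proof.
  intros Hf Hg H. pose proof (cf_ge_1 f Hf); pose proof (cf_ge_1 g Hg).
  destruct n as [|n].
  - pose proof (inv_le_1 (cf f)); pose proof (inv_le_1 (cf g)). apply Rabs_le; simpl; lra.
  - eapply Rle_trans; [apply inv_lipschitz; auto|].
    pose proof (cf_fin_approx f n (pos_nat_cf_digits _ Hf)) as Hfn.
    pose proof (cf_fin_approx g n (pos_nat_cf_digits _ Hg)) as Hgn.
    rewrite (cf_fin_ext n f g) in Hfn by (intros; apply H; lia).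
    apply Rabs_le_between in Hfn, Hgn. apply Rabs_le. simpl pow. lra.
Qed.

Lemma cf_strict_bounds f : pos_nat f -> INR (f O) < cf f < INR (f O) + 1.
Proof.
  intros Hf.
  assert (Htt : pos_nat (fun k => f (S (S k)))) by (intro; apply Hf).
  rewrite cf_unfold, (cf_unfold (fun k => f (S k))) by (intros i _; apply Hf).
  pose proof (inv_le_1 _ (cf_ge_1 _ Htt)). pose proof (INR_ge_1 _ (Hf 1%nat)).
  pose proof (inv_le_1 (INR (f 1%nat) + / cf (fun k => f (S (S k)))) ltac:(lra)).
  assert (/ (INR (f 1%nat) + / cf (fun k => f (S (S k)))) < 1).
  { rewrite <- Rinv_1. apply Rinv_lt_contravar; lra. }
  lra.
Qed.

Lemma cf_inj_head f g : pos_nat f -> pos_nat g -> cf f = cf g -> f O = g O.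
Proof.
  intros Hf Hg E. pose proof (cf_strict_bounds f Hf); pose proof (cf_strict_bounds g Hg).
  assert (H1 : INR (f O) < INR (S (g O))) by (rewrite S_INR; lra).
  assert (H2 : INR (g O) < INR (S (f O))) by (rewrite S_INR; lra).
  apply INR_lt in H1, H2. lia.
Qed.

Lemma cf_inj : forall n f g, pos_nat f -> pos_nat g -> cf f = cf g -> f n = g n.
Proof.
  induction n as [|n IH]; intros f g Hf Hg E; [exact (cf_inj_head f g Hf Hg E)|].
  apply (IH (fun k => f (S k)) (fun k => g (S k))); try (intro; apply Hf || apply Hg).
  pose proof (cf_inj_head f g Hf Hg E) as E0.
  rewrite cf_unfold, (cf_unfold g), E0 in E by (apply pos_nat_cf_digits; assumption).
  apply Rinv_eq_reg. lra.
Qed.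

Definition agree_on (w : nat) (a b : bseq) : Prop :=
  forall i, (Z.abs i <= Z.of_nat w)%Z -> a i = b i.

Lemma agree_on_le w w' a b : (w <= w')%nat -> agree_on w' a b -> agree_on w a b.
Proof. intros Hw H i Hi; apply H; lia. Qed.

Lemma shiftn_pos q a : pos_seq a -> pos_seq (shiftn q a).
Proof. intros H n; apply H. Qed.

Lemma transpose_pos a : pos_seq a -> pos_seq (transpose a).
Proof. intros H n; apply H. Qed.

Lemma Sigma_pos A t : Sigma A t -> pos_seq t.
Proof. intros H n; apply (H n). Qed.

Lemma lambda0_split a : pos_seq a -> lambda0 a =
  INR (a 0%Z) + / cf (fun k => a (Z.of_nat (S k))) + / cf (fun k => a (- Z.of_nat (S k))%Z).
Proof.
  intros Ha. unfold lambda0. rewrite cf_unfold by (intros i _; apply Ha).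
  rewrite cf0_inv by (intros i; apply Ha). reflexivity.
Qed.

Lemma lambda0_close a b w : pos_seq a -> pos_seq b -> agree_on w a b ->
  Rabs (lambda0 a - lambda0 b) <= 16 * (/ 2) ^ w.
Proof.
  intros Ha Hb H. rewrite !lambda0_split, (H 0%Z) by (auto; lia).
  pose proof (inv_cf_close (fun k => a (Z.of_nat (S k))) (fun k => b (Z.of_nat (S k))) w
    (fun i => Ha _) (fun i => Hb _) ltac:(intros i Hi; apply H; lia)) as Hr.
  pose proof (inv_cf_close (fun k => a (- Z.of_nat (S k))%Z) (fun k => b (- Z.of_nat (S k))%Z) w
    (fun i => Ha _) (fun i => Hb _) ltac:(intros i Hi; apply H; lia)) as Hl.
  apply Rabs_le_between in Hr, Hl. apply Rabs_le. lra.
Qed.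

Lemma lambda0_transpose a : pos_seq a -> lambda0 (transpose a) = lambda0 a.
Proof.
  intros Ha. rewrite !lambda0_split by auto using transpose_pos. unfold transpose.
  rewrite (cf_ext (fun k => a (- - Z.of_nat (S k))%Z) (fun k => a (Z.of_nat (S k))))
    by (intros; rewrite Z.opp_involutive; reflexivity).
  simpl Z.opp. ring.
Qed.

Lemma shiftn_transpose q a : shiftn q (transpose a) = transpose (shiftn (- q) a).
Proof. apply functional_extensionality; intro k; unfold shiftn, transpose; f_equal; lia. Qed.

Lemma markov_transpose a : pos_seq a -> markov (transpose a) = markov a.
Proof.
  intros Ha. unfold markov. apply Lub_Rbar_eqset. intros r; split; intros [n ->]; exists (- n)%Z.
  - rewrite shiftn_transpose, lambda0_transpose; auto using shiftn_pos.
  - rewrite shiftn_transpose, lambda0_transpose, Z.opp_involutive; auto using shiftn_pos.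
Qed.

Lemma lambda0_le_markov a n : Rbar_le (lambda0 (shiftn n a)) (markov a).
Proof. apply (proj1 (Lub_Rbar_correct _)). exists n; reflexivity. Qed.

Lemma lambda0_le_of_markov a n (M : R) : Rbar_le (markov a) M -> lambda0 (shiftn n a) <= M.
Proof. intros H. exact (Rbar_le_trans _ _ (Finite M) (lambda0_le_markov a n) H). Qed.

(** * Pieces and bridges *)

Lemma glue_left a k tau u n : (n <= k)%Z -> glue a k tau u n = a n.
Proof. intros H; unfold glue. destruct (Z.leb_spec n k); auto; lia. Qed.

Lemma glue_right a k tau u n : (k + Z.of_nat (length tau) < n)%Z ->
  glue a k tau u n = u (Z.to_nat (n - k - 1 - Z.of_nat (length tau))).
Proof.
  intros H; unfold glue. destruct (Z.leb_spec n k); try lia.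
  destruct (Z.leb_spec (n - k) (Z.of_nat (length tau))); auto; lia.
Qed.

Lemma glue_pos a k tau u : pos_seq a -> List.Forall (fun c => (1 <= c)%nat) tau -> pos_nat u ->
  pos_seq (glue a k tau u).
Proof.
  intros Ha Ht Hu n. unfold glue.
  destruct (Z.leb_spec n k); auto.
  destruct (Z.leb_spec (n - k) (Z.of_nat (length tau))); auto.
  rewrite Forall_forall in Ht. apply Ht, nth_In. lia.
Qed.

Definition right_piece (m : R) (gamma : bseq) (k : nat) (P t : bseq) (D : Z) : Prop :=
  pos_seq P /\ Rbar_le (markov P) (m + (/ 2) ^ k) /\ (Z.of_nat k <= D)%Z /\
  (forall n, (n <= Z.of_nat k)%Z -> P n = gamma n) /\
  (forall n, (D < n)%Z -> P n = t (n - D)%Z).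

Definition left_piece (m : R) (gamma : bseq) (k : nat) (N r : bseq) (D : Z) : Prop :=
  pos_seq N /\ Rbar_le (markov N) (m + (/ 2) ^ k) /\ (Z.of_nat k <= D)%Z /\
  (forall n, (- Z.of_nat k <= n)%Z -> N n = gamma n) /\
  (forall n, (n < - D)%Z -> N n = r (n + D)%Z).

Lemma right_piece_exists B (m : R) gamma k : pos_seq gamma -> markov gamma = m ->
  connects_pos gamma B -> exists P t D, Sigma B t /\ right_piece m gamma k P t D.
Proof.
  intros Hg Hm Hc. destruct (Hc k) as [tau [u [Htau [[t [Ht Hu]] Hlt]]]].
  exists (glue gamma (Z.of_nat k) tau u), t, (Z.of_nat k + Z.of_nat (length tau))%Z.
  split; [exact Ht|]. split; [|split; [|split; [|split]]].
  - apply glue_pos; auto. intro j; rewrite Hu; apply (Sigma_pos _ _ Ht).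
  - rewrite Hm, <- pow_inv in Hlt. apply Rbar_lt_le, Hlt.
  - lia.
  - intros n Hn; apply glue_left, Hn.
  - intros n Hn. rewrite glue_right, Hu by lia. f_equal. lia.
Qed.

Lemma symmetric_reverse B t : symmetric B -> Sigma B t ->
  exists r, Sigma B r /\ forall j, r (- Z.of_nat (S j))%Z = t (Z.of_nat (S j)).
Proof.
  intros Hsym Ht.
  destruct (proj1 (Hsym _) (ex_intro _ t (conj Ht eq_refl))) as [r [Hr Er]].
  exists r; split; auto.
  assert (Hrp : pos_nat (fun j => r (- Z.of_nat (S j))%Z)) by (intro; apply (Sigma_pos _ _ Hr)).
  assert (Htp : pos_nat (fun j => t (Z.of_nat (S j)))) by (intro; apply (Sigma_pos _ _ Ht)).
  rewrite !cf0_inv in Er by assumption. apply Rinv_eq_reg in Er.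
  intro j; symmetry; exact (cf_inj j _ _ Htp Hrp Er).
Qed.

Lemma left_piece_exists B (m : R) gamma k : pos_seq gamma -> markov gamma = m ->
  symmetric B -> connects_neg gamma B -> exists N r D, Sigma B r /\ left_piece m gamma k N r D.
Proof.
  intros Hg Hm Hsym Hc.
  destruct (right_piece_exists B m (transpose gamma) k)
    as [P [t [D [Ht [HP [HPm [HD [HPl HPr]]]]]]]]; auto using transpose_pos.
  { rewrite markov_transpose; auto. }
  destruct (symmetric_reverse B t Hsym Ht) as [r [Hr Hrt]].
  exists (transpose P), r, D. split; [exact Hr|].
  split; [|split; [|split; [exact HD|split]]].
  - apply transpose_pos, HP.
  - rewrite markov_transpose; auto.
  - intros n Hn. unfold transpose at 1. rewrite HPl by lia. unfold transpose. f_equal; lia.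
  - intros n Hn. unfold transpose. rewrite HPr by lia.
    replace (- n - D)%Z with (Z.of_nat (S (Z.to_nat (- n - D - 1)))) by lia.
    rewrite <- Hrt. f_equal; lia.
Qed.

Definition bridge (m : R) (w : nat) (t r : bseq) (p : Z) (s : bseq) : Prop :=
  pos_seq s /\ Rbar_le (markov s) m /\ (2 * Z.of_nat w < p)%Z /\
  agree_on w s t /\ agree_on w (shiftn p s) r.

Lemma bridge_exists B (m : R) w t r : transitive B ->
  (forall beta, Sigma B beta -> Rbar_le (markov beta) m) ->
  Sigma B t -> Sigma B r -> exists p s, bridge m w t r p s.
Proof.
  intros Htr HB Ht Hr. destruct (Htr t r Ht Hr w) as [s [p [Hs [Hp [Hst Hsr]]]]].
  exists p, s. split; [exact (Sigma_pos _ _ Hs)|]. split; [exact (HB s Hs)|].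
  split; [lia|split].
  - intros i Hi; apply Hst; lia.
  - intros i Hi; apply Hsr; lia.
Qed.

(** * Concatenation *)

Definition in_segment (c : nat -> Z) (j : nat) (l : Z) : Prop :=
  (l < c (S j))%Z /\ (j = O \/ (c j <= l)%Z).

Section Segments.
Variable c : nat -> Z.
Hypothesis c_incr : forall j, (c j < c (S j))%Z.

Lemma cut_grows j j' : (j <= j')%nat -> (c j + Z.of_nat (j' - j) <= c j')%Z.
Proof.
  induction 1 as [|j' Hj IH]; [rewrite Nat.sub_diag; lia|].
  specialize (c_incr j'). replace (S j' - j)%nat with (S (j' - j)) by lia. lia.
Qed.

Lemma in_segment_exists l : exists j, in_segment c j l.
Proof.
  assert (H : forall J, (l < c (S J))%Z -> exists j, in_segment c j l).
  { induction J as [|J IH]; intros HJ; [exists O; split; auto|].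
    destruct (Z_lt_le_dec l (c (S J))); [apply IH; auto|].
    exists (S J); split; auto. }
  apply (H (Z.to_nat (l - c O))).
  pose proof (cut_grows O (S (Z.to_nat (l - c O))) ltac:(lia)). lia.
Qed.

Lemma in_segment_unique j j' l : in_segment c j l -> in_segment c j' l -> j = j'.
Proof.
  intros [H1 H2] [H1' H2'].
  destruct (Nat.lt_trichotomy j j') as [H|[H|H]]; auto.
  - pose proof (cut_grows (S j) j' H). destruct H2'; lia.
  - pose proof (cut_grows (S j') j H). destruct H2; lia.
Qed.

Lemma in_segment_index_ge j J l : in_segment c j l -> (c J <= l)%Z -> (J <= j)%nat.
Proof.
  intros [H1 _] H. destruct (le_lt_dec J j) as [|HJ]; auto.
  pose proof (cut_grows (S j) J HJ). lia.
Qed.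

End Segments.

(* [Sq j], placed at offset [o j], is copied on the [j]-th segment [[c j, c (S j))]
   (segment 0 is unbounded below); consecutive pieces agree on a window of radius
   [W j] around the cut [c (S j)]. *)
Lemma concatenation_exists (Sq : nat -> bseq) (o c : nat -> Z) (W : nat -> nat) :
  (forall j, (c j + Z.of_nat (W j) < c (S j))%Z) ->
  (forall j, (W j <= W (S j))%nat) ->
  (forall j, agree_on (W j) (shiftn (c (S j) - o j) (Sq j))
                            (shiftn (c (S j) - o (S j)) (Sq (S j)))) ->
  exists alpha : bseq, forall j l, in_segment c j l ->
    agree_on (W (pred j)) (shiftn l alpha) (shiftn (l - o j) (Sq j)).
Proof.
  intros Hc HW Hov.
  assert (Hc1 : forall j, (c j < c (S j))%Z) by (intro j; specialize (Hc j); lia).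
  assert (HWp : forall j, (W (pred j) <= W j)%nat) by (intros [|j]; [apply Nat.le_refl|apply HW]).
  assert (Hjump : forall j l, (Z.abs (l - c (S j)) <= Z.of_nat (W j))%Z ->
            Sq j (l - o j)%Z = Sq (S j) (l - o (S j))%Z).
  { intros j l Hl. specialize (Hov j _ Hl). unfold shiftn in Hov.
    replace (l - c (S j) + (c (S j) - o j))%Z with (l - o j)%Z in Hov by lia.
    replace (l - c (S j) + (c (S j) - o (S j)))%Z with (l - o (S j))%Z in Hov by lia.
    exact Hov. }
  destruct (functional_choice _ (in_segment_exists c Hc1)) as [seg Hseg].
  exists (fun l => Sq (seg l) (l - o (seg l))%Z).
  intros j l [Hj1 Hj2] d Hd. unfold shiftn.
  replace (d + (l - o j))%Z with ((d + l) - o j)%Z by lia.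
  assert (E : forall j', in_segment c j' (d + l) -> seg (d + l)%Z = j')
    by (intros; eapply in_segment_unique; eauto).
  destruct (Z_lt_le_dec (d + l) (c (S j))) as [Hlt|Hge].
  - destruct j as [|j].
    + rewrite (E O) by (split; auto). reflexivity.
    + destruct Hj2 as [Hj2|Hj2]; [discriminate|].
      destruct (Z_lt_le_dec (d + l) (c (S j))) as [Hlt'|Hge'].
      * specialize (Hc j). rewrite (E j) by (split; [auto|right; simpl in Hd; lia]).
        apply Hjump. simpl in Hd. lia.
      * rewrite (E (S j)) by (split; auto). reflexivity.
  - specialize (Hc (S j)). specialize (HWp j). specialize (HW j).
    rewrite (E (S j)) by (split; [lia|right; auto]).
    symmetry; apply Hjump. lia.
Qed.

Lemma lagrange_of_local_approx (alpha gamma : bseq) (m : R) :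
  pos_seq alpha -> pos_seq gamma -> lambda0 gamma = m ->
  (forall w n0, exists n, (n0 <= n)%nat /\ agree_on w (shiftn (Z.of_nat n) alpha) gamma) ->
  (forall w, exists n0, forall n, (n0 <= n)%nat -> exists S, pos_seq S /\
     lambda0 S <= m + (/ 2) ^ w /\ agree_on w (shiftn (Z.of_nat n) alpha) S) ->
  lagrange alpha = m.
Proof.
  intros Ha Hg Hl Hnear Hbelow. apply is_LimSup_seq_unique. intros [eps Heps]. split; simpl.
  - intros n0. destruct (half_pow_lt_eventually (eps / 16)) as [w Hw]; [lra|].
    destruct (Hnear w n0) as [n [Hn Hag]]. exists n; split; auto.
    pose proof (lambda0_close _ _ _ (shiftn_pos _ _ Ha) Hg Hag) as H.
    specialize (Hw w (le_n _)). apply Rabs_le_between in H. lra.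
  - destruct (half_pow_lt_eventually (eps / 17)) as [w Hw]; [lra|].
    destruct (Hbelow w) as [n0 H0]. exists n0. intros n Hn.
    destruct (H0 n Hn) as [S [HS [HSm Hag]]].
    pose proof (lambda0_close _ _ _ (shiftn_pos _ _ Ha) HS Hag) as H.
    specialize (Hw w (le_n _)). apply Rabs_le_between in H. lra.
Qed.

Definition by_round {X} (f : nat -> nat -> X) (j : nat) : X := f (j / 3)%nat (j mod 3)%nat.

Lemma by_round_eq {X} (f : nat -> nat -> X) k i :
  (i < 3)%nat -> by_round f (3 * k + i)%nat = f k i.
Proof.
  intros Hi. unfold by_round.
  rewrite <- (Nat.div_unique (3 * k + i) 3 k i Hi eq_refl).
  rewrite <- (Nat.mod_unique (3 * k + i) 3 k i Hi eq_refl). reflexivity.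
Qed.

Lemma round_cases (Q : nat -> Prop) : (forall k, Q (3 * k + 0)%nat) ->
  (forall k, Q (3 * k + 1)%nat) -> (forall k, Q (3 * k + 2)%nat) -> forall j, Q j.
Proof.
  intros H0 H1 H2 j. rewrite (Nat.div_mod j 3) by lia.
  pose proof (Nat.mod_upper_bound j 3 ltac:(lia)).
  destruct (j mod 3) as [|[|[|]]]; auto; lia.
Qed.

Section Rounds.
Variables (m : R) (gamma : bseq) (P N s t r : nat -> bseq) (D D' p : nat -> Z).
Hypothesis P_piece : forall k, right_piece m gamma k (P k) (t k) (D k).
Hypothesis N_piece : forall k, left_piece m gamma k (N k) (r k) (D' k).
Hypothesis s_bridge : forall k, bridge m (2 * k + 2) (t k) (r (S k)) (p k) (s k).

(* Round [k] lays out [N k] and [P k] both centred at [center k], where they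
   copy [gamma], followed by the bridge [s k] placed so that it continues the
   tail [t k] of [P k] and leads into the head [r (S k)] of [N (S k)]. *)
Fixpoint center (k : nat) : Z :=
  match k with O => 0%Z | S k' => (center k' + D k' + p k' + D' (S k'))%Z end.

Definition piece : nat -> bseq :=
  by_round (fun k i => match i with O => N k | S O => P k | _ => s k end).
Definition offset : nat -> Z :=
  by_round (fun k i => match i with O | S O => center k | _ => center k + D k end)%Z.
Definition cut : nat -> Z :=
  by_round (fun k i => match i with O => center k - D' k - Z.of_nat (S k)
                               | S O => center k | _ => center k + D k + Z.of_nat (S k) end)%Z.
Definition width : nat -> nat := by_round (fun k _ => k).

Ltac eval_round :=
  unfold piece, offset, cut, width; rewrite ?by_round_eq by lia; cbn beta iota.

Lemma center_ge k : (Z.of_nat k <= center k)%Z.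
Proof.
  induction k as [|k IH]; simpl; [lia|].
  destruct (P_piece k) as [_ [_ [HD _]]]. destruct (N_piece (S k)) as [_ [_ [HD' _]]].
  destruct (s_bridge k) as [_ [_ [Hp _]]]. lia.
Qed.

Lemma cut_step j : (cut j + Z.of_nat (width j) < cut (S j))%Z.
Proof.
  induction j using round_cases;
    [replace (S (3 * j + 0)) with (3 * j + 1)%nat by lia
    |replace (S (3 * j + 1)) with (3 * j + 2)%nat by lia
    |replace (S (3 * j + 2)) with (3 * S j + 0)%nat by lia]; eval_round.
  - destruct (N_piece j) as [_ [_ [HD' _]]]. lia.
  - destruct (P_piece j) as [_ [_ [HD _]]]. lia.
  - destruct (s_bridge j) as [_ [_ [Hp _]]]. simpl center. lia.
Qed.

Lemma cut_incr j : (cut j < cut (S j))%Z.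
Proof. pose proof (cut_step j). lia. Qed.

Lemma width_mono j j' : (j <= j')%nat -> (width j <= width j')%nat.
Proof. intros H. unfold width, by_round. apply Nat.Div0.div_le_mono, H. Qed.

Lemma piece_overlap j : agree_on (width j) (shiftn (cut (S j) - offset j) (piece j))
                                           (shiftn (cut (S j) - offset (S j)) (piece (S j))).
Proof.
  induction j using round_cases;
    [replace (S (3 * j + 0)) with (3 * j + 1)%nat by lia
    |replace (S (3 * j + 1)) with (3 * j + 2)%nat by lia
    |replace (S (3 * j + 2)) with (3 * S j + 0)%nat by lia]; eval_round;
    intros i Hi; unfold shiftn.
  - destruct (N_piece j) as [_ [_ [_ [HN _]]]]. destruct (P_piece j) as [_ [_ [_ [HP _]]]].
    rewrite HN, HP by lia. f_equal; lia.
  - destruct (P_piece j) as [_ [_ [_ [_ HP]]]]. destruct (s_bridge j) as [_ [_ [_ [Hst _]]]].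
    rewrite HP, Hst by lia. f_equal; lia.
  - destruct (N_piece (S j)) as [_ [_ [_ [_ HN]]]]. destruct (s_bridge j) as [_ [_ [_ [_ Hsr]]]].
    simpl center. rewrite HN by lia. rewrite <- Hsr by lia. unfold shiftn. f_equal; lia.
Qed.

Lemma piece_pos j : pos_seq (piece j).
Proof.
  induction j using round_cases; eval_round;
    [apply (N_piece j)|apply (P_piece j)|apply (s_bridge j)].
Qed.

Lemma piece_markov j : Rbar_le (markov (piece j)) (m + (/ 2) ^ width j).
Proof.
  induction j using round_cases; eval_round;
    [apply (N_piece j)|apply (P_piece j)|].
  destruct (s_bridge j) as [_ [Hs _]].
  apply (Rbar_le_trans _ _ _ Hs). simpl. pose proof (half_pow_pos j). lra.
Qed.

Section Concatenation.
Variable alpha : bseq.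
Hypothesis alpha_pieces : forall j l, in_segment cut j l ->
  agree_on (width (pred j)) (shiftn l alpha) (shiftn (l - offset j) (piece j)).

Lemma concatenation_pos : pos_seq alpha.
Proof.
  intro l. destruct (in_segment_exists cut cut_incr l) as [j Hj].
  specialize (alpha_pieces j l Hj 0%Z ltac:(lia)). unfold shiftn in alpha_pieces.
  rewrite Z.add_0_l in alpha_pieces. rewrite alpha_pieces. apply piece_pos.
Qed.

Lemma concatenation_near_gamma w n0 :
  exists n, (n0 <= n)%nat /\ agree_on w (shiftn (Z.of_nat n) alpha) gamma.
Proof.
  set (k := Nat.max w n0). pose proof (center_ge k).
  exists (Z.to_nat (center k)). split; [lia|]. rewrite Z2Nat.id by lia.
  assert (Hseg : in_segment cut (3 * k + 1) (center k)).
  { destruct (P_piece k) as [_ [_ [HD _]]].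
    split; replace (S (3 * k + 1)) with (3 * k + 2)%nat by lia; eval_round; lia. }
  intros i Hi. rewrite (alpha_pieces _ _ Hseg).
  2:{ replace (pred (3 * k + 1)) with (3 * k + 0)%nat by lia. eval_round. lia. }
  unfold shiftn. eval_round. destruct (P_piece k) as [_ [_ [_ [HP _]]]].
  rewrite HP by lia. f_equal; lia.
Qed.

Lemma concatenation_below w : exists n0, forall n, (n0 <= n)%nat -> exists S, pos_seq S /\
  lambda0 S <= m + (/ 2) ^ w /\ agree_on w (shiftn (Z.of_nat n) alpha) S.
Proof.
  exists (Z.to_nat (cut (3 * S w + 0))). intros n Hn.
  destruct (in_segment_exists cut cut_incr (Z.of_nat n)) as [j Hj].
  assert (Hjw : (3 * S w + 0 <= j)%nat)
    by (apply (in_segment_index_ge cut cut_incr j _ _ Hj); lia).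
  assert (Hw : (w <= width (pred j))%nat).
  { replace w with (width (3 * w + 2)) by (eval_round; reflexivity). apply width_mono; lia. }
  exists (shiftn (Z.of_nat n - offset j) (piece j)). split; [|split].
  - apply shiftn_pos, piece_pos.
  - eapply Rle_trans; [apply lambda0_le_of_markov, piece_markov|].
    apply Rplus_le_compat_l, half_pow_le.
    eapply Nat.le_trans; [exact Hw|]. apply width_mono; lia.
  - apply (agree_on_le _ _ _ _ Hw), alpha_pieces, Hj.
Qed.

End Concatenation.

Lemma rounds_concatenation : exists alpha, pos_seq alpha /\
  (forall w n0, exists n, (n0 <= n)%nat /\ agree_on w (shiftn (Z.of_nat n) alpha) gamma) /\
  (forall w, exists n0, forall n, (n0 <= n)%nat -> exists S, pos_seq S /\
     lambda0 S <= m + (/ 2) ^ w /\ agree_on w (shiftn (Z.of_nat n) alpha) S).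
Proof.
  destruct (concatenation_exists piece offset cut width cut_step
              (fun j => width_mono j (S j) (Nat.le_succ_diag_r j)) piece_overlap)
    as [alpha Halpha].
  exists alpha. split; [|split].
  - apply (concatenation_pos alpha Halpha).
  - apply (concatenation_near_gamma alpha Halpha).
  - apply (concatenation_below alpha Halpha).
Qed.

End Rounds.

Lemma choice2 {A B1 B2} (R : A -> B1 -> B2 -> Prop) :
  (forall a, exists b1 b2, R a b1 b2) -> exists f1 f2, forall a, R a (f1 a) (f2 a).
Proof.
  intros H. destruct (functional_choice (fun a (b : B1 * B2) => R a (fst b) (snd b))) as [f Hf].
  - intros a. destruct (H a) as [b1 [b2 Hb]]. exists (b1, b2). exact Hb.
  - exists (fun a => fst (f a)), (fun a => snd (f a)). exact Hf.
Qed.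

Lemma choice3 {A B1 B2 B3} (R : A -> B1 -> B2 -> B3 -> Prop) :
  (forall a, exists b1 b2 b3, R a b1 b2 b3) -> exists f1 f2 f3, forall a, R a (f1 a) (f2 a) (f3 a).
Proof.
  intros H. destruct (choice2 (fun a (b : B1 * B2) b3 => R a (fst b) (snd b) b3)) as [f [f3 Hf]].
  - intros a. destruct (H a) as [b1 [b2 [b3 Hb]]]. exists (b1, b2), b3. exact Hb.
  - exists (fun a => fst (f a)), (fun a => snd (f a)), f3. exact Hf.
Qed.

Theorem lemma3p4 (B C : SFT) (x m : R) (gamma : bseq) :
  (forall t, Sigma B t -> Sigma C t) ->
  transitive B -> symmetric B -> transitive C -> symmetric C ->
  (forall beta, Sigma B beta -> Rbar_le (markov beta) (Finite x)) ->
  Sigma C gamma ->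
  markov gamma = Finite m -> lambda0 gamma = m -> x < m ->
  connects_pos gamma B -> connects_neg gamma B ->
  Lspec m.
Proof.
  intros _ HtrB HsymB _ _ HB Hg Hm Hl Hxm Hpos Hneg.
  pose proof (Sigma_pos _ _ Hg) as Hgp.
  destruct (choice3 _ (fun k => right_piece_exists B m gamma k Hgp Hm Hpos)) as [P [t [D HP]]].
  destruct (choice3 _ (fun k => left_piece_exists B m gamma k Hgp Hm HsymB Hneg))
    as [N [r [D' HN]]].
  assert (HBm : forall beta, Sigma B beta -> Rbar_le (markov beta) m).
  { intros beta Hbeta. apply (Rbar_le_trans _ _ _ (HB beta Hbeta)). simpl; lra. }
  destruct (choice2 _ (fun k => bridge_exists B m (2 * k + 2) (t k) (r (S k))
                                  HtrB HBm (proj1 (HP k)) (proj1 (HN (S k)))))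
    as [p [s Hs]].
  destruct (rounds_concatenation m gamma P N s t r D D' p
              (fun k => proj2 (HP k)) (fun k => proj2 (HN k)) Hs) as [alpha [Hapos [Hnear Hbelow]]].
  exists alpha. split; [exact Hapos|].
  exact (lagrange_of_local_approx alpha gamma m Hapos Hgp Hl Hnear Hbelow).
Qed.
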